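(* There is no connected, non-complete, $5$-regular and $1$ net-regular SRSG in $\mathcal C_1\cup\mathcal C_4\cup\mathcal C_5$ with parameters $(n,5,a,b,c)$ satisfying $(a,b)=(2,0)$.
   Context: A signed graph $\dot G=(G,\sigma)$ is a simple graph $G$ with $\sigma:E(G)\to\{\pm1\}$; adjacency matrix $A_{\dot G}$ has entries $\sigma(v_iv_j)$ for adjacent vertices and $0$ otherwise. Degree and connectedness refer to $G$; net-degree is $d^+(v)-d^-(v)$; $\rho$ net-regular means all net-degrees equal $\rho$. $\dot G$ on $n$ vertices is an SRSG if it is neither homogeneous complete nor edgeless and there are $r\in\mathbb N$, $a,b,c\in\mathbb Z$ with $(A^2_{\dot G})_{ii}=r$, $(A^2_{\dot G})_{ij}=a$ for positive edges, $b$ for negative edges, $c$ for distinct non-adjacent pairs; parameters $(n,r,a,b,c)$. Classes: $\mathcal C_1$: $a=-b$ and (complete, or non-complete with $c\neq0$); $\mathcal C_4$: $a\ne-b$, non-complete, $c=0$; $\mathcal C_5$: $a\neq-b$, non-complete, $c\notin\{0,\frac{a+b}{2}\}$. *)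

From mathcomp Require Import all_boot all_order all_algebra.
Set Implicit Arguments. Unset Strict Implicit. Unset Printing Implicit Defensive.
Import GRing.Theory Num.Theory.
Local Open Scope ring_scope.

(* A signed graph on vertex set 'I_n: an underlying simple graph given by a
   symmetric irreflexive relation [adj], and a signature [sg] (values +-1,
   symmetric, only meaningful on edges). *)
Record signed_graph (n : nat) := SignedGraph {
  adj : rel 'I_n;
  sg  : 'I_n -> 'I_n -> int;
  adj_sym : forall i j, adj i j = adj j i;
  adj_irr : forall i, ~~ adj i i;
  sg_sym : forall i j, sg i j = sg j i;
  sg_pm1 : forall i j, adj i j -> sg i j = 1 \/ sg i j = -1
}.

Section SG.
Variables (n : nat) (G : signed_graph n).

Definition sadj : 'M[int]_n :=
  \matrix_(i, j) (if adj G i j then sg G i j else 0).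

Definition pos_edge i j := adj G i j && (sg G i j == 1).
Definition neg_edge i j := adj G i j && (sg G i j == -1).

Definition sdeg (v : 'I_n) : nat := #|[set j | adj G v j]|.
Definition net_deg (v : 'I_n) : int :=
  (#|[set j | pos_edge v j]|%:Z - #|[set j | neg_edge v j]|%:Z).

Definition sregular (r : nat) := forall v, sdeg v = r.
Definition net_regular (rho : int) := forall v, net_deg v = rho.

Definition sconnected := forall i j, connect (adj G) i j.
Definition scomplete := forall i j, i != j -> adj G i j.
Definition homogeneous :=
  (forall i j, adj G i j -> sg G i j = 1) \/ (forall i j, adj G i j -> sg G i j = -1).
Definition edgeless := forall i j, ~~ adj G i j.

Definition SRSG (r : nat) (a b c : int) :=
  ~ (scomplete /\ homogeneous) /\ ~ edgeless /\
  (forall i, (sadj *m sadj) i i = r%:Z) /\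
  (forall i j, pos_edge i j -> (sadj *m sadj) i j = a) /\
  (forall i j, neg_edge i j -> (sadj *m sadj) i j = b) /\
  (forall i j, i != j -> ~~ adj G i j -> (sadj *m sadj) i j = c).

Definition classC1 (a b c : int) :=
  a = - b /\ (scomplete \/ (~ scomplete /\ c != 0)).
Definition classC4 (a b c : int) :=
  a != - b /\ ~ scomplete /\ c = 0.
(* c \notin {0, (a+b)/2}, the latter written without division *)
Definition classC5 (a b c : int) :=
  a != - b /\ ~ scomplete /\ c != 0 /\ c *+ 2 != a + b.
End SG.

From mathcomp Require Import all_boot all_order all_algebra.
From mathcomp Require Import zify.
Set Implicit Arguments. Unset Strict Implicit. Unset Printing Implicit Defensive.
Import Order.TTheory GRing.Theory Num.Theory.
Local Open Scope ring_scope.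

(* Write A for the signed and B for the unsigned adjacency matrix, J for the
   all-ones matrix. The SRSG equations with (a, b) = (2, 0) say
   A^2 = (5 - c) I + A + (1 - c) B + c J, and net-regularity gives AJ = JA, so
   comparing A A^2 with A^2 A yields AB = BA once c <> 1 (which C1, C4 and C5
   all force). Entrywise, B^2 - A^2 - (AB - BA) counts four times the paths
   i -(neg)- k -(pos)- j, hence B^2 = A^2 mod 4, and |A^2| <= B^2 <= 5.
   Row sums of A^2 give 3 positive and 2 negative neighbours at each vertex and
   c * #(non-neighbours) = -10, which leaves c in {-1, -2}. The row sums 25 of
   B^2 exclude c = -1, and for c = -2 force each vertex to have exactly one
   negative neighbour j with B^2_ij = 4. These pairs form a perfect matching,
   so n is even, whereas counting neighbours gives n = 1 + 3 + 2 + 5 = 11. *)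

Lemma sumr_eq_const (n : nat) (P : pred 'I_n) (f : 'I_n -> int) (x : int) :
  (forall j, P j -> f j = x) -> \sum_(j | P j) f j = x * #|[set j | P j]|%:Z.
Proof.
move=> fx; rewrite (eq_bigr (fun=> x)) // sumr_const -mulr_natr natz.
by congr (_ * Posz _); apply: eq_card => j; rewrite inE.
Qed.

Lemma sum_mulmx_row (R : comPzRingType) (n : nat) (M N : 'M[R]_n) i :
  \sum_j (M *m N) i j = \sum_k M i k * \sum_j N k j.
Proof.
under eq_bigr do rewrite mxE.
by rewrite exchange_big; apply: eq_bigr => k _; rewrite mulr_sumr.
Qed.

Lemma mulmx_comm_of_sqr (R : idomainType) (n : nat) (A B J : 'M[R]_n)
    (al de be ga : R) :
  A *m A = al%:M + de *: A + be *: B + ga *: J -> A *m J = J *m A ->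
  be != 0 -> A *m B = B *m A.
Proof.
move=> A2 AJ be0; have := mulmxA A A A; rewrite A2.
rewrite !mulmxDr !mulmxDl mul_mx_scalar mul_scalar_mx -!scalemxAr -!scalemxAl AJ.
rewrite -!addrA => /addrI/addrI/addIr/matrixP AB_BA.
by apply/matrixP => i j; move: (AB_BA i j); rewrite !mxE; apply: mulfI.
Qed.

Lemma sum_sym_hollow (R : nmodType) (n : nat) (F : 'I_n -> 'I_n -> R) :
  (forall i j, F i j = F j i) -> (forall i, F i i = 0) ->
  \sum_i \sum_j F i j =
    (\sum_(i : 'I_n) \sum_(j : 'I_n | (i < j)%N) F i j) *+ 2.
Proof.
move=> Fsym F0; have split_row i :
    \sum_j F i j =
      \sum_(j : 'I_n | (i < j)%N) F i j + \sum_(j : 'I_n | (j < i)%N) F i j.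
  rewrite (bigID (fun j : 'I_n => (i < j)%N)) /=; congr (_ + _).
  rewrite [LHS]big_mkcond [RHS]big_mkcond; apply: eq_bigr => j _.
  by case: ltngtP => // /val_inj ->; rewrite F0.
rewrite (eq_bigr _ (fun i _ => split_row i)) big_split mulr2n; congr (_ + _).
under eq_bigr do rewrite big_mkcond.
rewrite exchange_big; apply: eq_bigr => j _.
by rewrite [RHS]big_mkcond; apply: eq_bigr => i _; rewrite Fsym.
Qed.

Section SignedGraphCounting.
Variables (n : nat) (G : signed_graph n).

Definition uadj : 'M[int]_n := \matrix_(i, j) (adj G i j)%:R.
Definition nonadj i j := (i != j) && ~~ adj G i j.

Local Notation A := (sadj G).
Local Notation B := uadj.

Variant edge_spec (i j : 'I_n) : bool -> bool -> bool -> int -> int -> Prop :=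
  | EdgeNone : edge_spec i j false false false 0 0
  | EdgePos : edge_spec i j true true false 1 1
  | EdgeNeg : edge_spec i j true false true (-1) 1.

Lemma edgeP i j :
  edge_spec i j (adj G i j) (pos_edge G i j) (neg_edge G i j) (A i j) (B i j).
Proof.
rewrite !mxE /pos_edge /neg_edge.
case: (boolP (adj G i j)) => [ij|_]; last exact: EdgeNone.
by case: (sg_pm1 ij) => ->; [exact: EdgePos | exact: EdgeNeg].
Qed.

Lemma sadj_sym i j : A i j = A j i.
Proof. by rewrite !mxE adj_sym sg_sym. Qed.

Lemma uadj_sym i j : B i j = B j i.
Proof. by rewrite !mxE adj_sym. Qed.

Lemma sum_split_edges i (f : 'I_n -> int) :
  \sum_j f j = f i + \sum_(j | pos_edge G i j) f j
    + \sum_(j | neg_edge G i j) f j + \sum_(j | nonadj i j) f j.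
Proof.
rewrite (big_mkcond (pos_edge G i)) (big_mkcond (neg_edge G i)).
rewrite (big_mkcond (nonadj i)) -!addrA -!big_split (bigD1 i) //=.
rewrite [X in _ = _ + X](bigD1 i) //= /nonadj eqxx /=.
have := adj_irr G i; case: edgeP => // _; rewrite !add0r; congr (_ + _).
apply: eq_bigr => j ji; rewrite eq_sym ji.
by case: edgeP; rewrite ?addr0 ?add0r.
Qed.

Definition npos i : int := #|[set j | pos_edge G i j]|%:Z.
Definition nneg i : int := #|[set j | neg_edge G i j]|%:Z.
Definition nnonadj i : int := #|[set j | nonadj i j]|%:Z.

Lemma sum_sadj_row i : \sum_j A i j = net_deg G i.
Proof.
rewrite (sum_split_edges i) (sumr_eq_const (x := 1)); last first.
  by move=> j; case: edgeP.
rewrite (sumr_eq_const (x := -1)); last by move=> j; case: edgeP.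
rewrite (sumr_eq_const (x := 0)); last by move=> j /andP[_]; case: edgeP.
by have := adj_irr G i; case: edgeP => // _; rewrite /net_deg; lia.
Qed.

Lemma sum_uadj_row i : \sum_j B i j = sdeg G i.
Proof.
have -> : \sum_j B i j = \sum_(j | adj G i j) (1 : int).
  by rewrite [RHS]big_mkcond; apply: eq_bigr => j _; rewrite mxE; case: adj.
by rewrite (sumr_eq_const (x := 1)) // mul1r.
Qed.

Lemma sdegE i : (sdeg G i)%:Z = npos i + nneg i.
Proof.
rewrite -sum_uadj_row (sum_split_edges i) (sumr_eq_const (x := 1)); last first.
  by move=> j; case: edgeP.
rewrite (sumr_eq_const (x := 1)); last by move=> j; case: edgeP.
rewrite (sumr_eq_const (x := 0)); last by move=> j /andP[_]; case: edgeP.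
by have := adj_irr G i; case: edgeP => // _; rewrite add0r !mul1r mul0r addr0.
Qed.

Lemma card_split_edges i : n%:Z = 1 + npos i + nneg i + nnonadj i.
Proof.
have := sum_split_edges i (fun=> 1); rewrite !(sumr_eq_const (x := 1)) // !mul1r.
by rewrite cardsT card_ord => <-.
Qed.

Lemma uadj2_diag i : (B *m B) i i = sdeg G i.
Proof.
rewrite -sum_uadj_row mxE; apply: eq_bigr => k _.
by rewrite uadj_sym; case: edgeP.
Qed.

Lemma uadj2_ge0 i j : 0 <= (B *m B) i j.
Proof. by rewrite mxE; apply: sumr_ge0 => k _; case: edgeP; case: edgeP. Qed.

Lemma uadj2_le_sdeg i j : (B *m B) i j <= sdeg G i.
Proof.
rewrite -sum_uadj_row mxE; apply: ler_sum => k _.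
by case: (edgeP i k); case: edgeP.
Qed.

Lemma norm_sadj2_le_uadj2 i j : `|(A *m A) i j| <= (B *m B) i j.
Proof.
rewrite !mxE; apply: le_trans (ler_norm_sum _ _ _) _; apply: ler_sum => k _.
by case: (edgeP i k); case: edgeP.
Qed.

Lemma uadj2_sub_sadj2 i j : A *m B = B *m A ->
  (B *m B) i j - (A *m A) i j =
  4 * #|[set k | neg_edge G i k && pos_edge G k j]|%:Z.
Proof.
move=> /matrixP/(_ i j); rewrite !mxE => AB_BA.
have term k : B i k * B k j - A i k * A k j = (A i k * B k j - B i k * A k j)
    + 4 * (if neg_edge G i k && pos_edge G k j then 1 else 0).
  by case: (edgeP i k); case: edgeP.
rewrite -sumrB (eq_bigr _ (fun k _ => term k)) big_split /= sumrB AB_BA subrr add0r.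
by rewrite -mulr_sumr -big_mkcond /= (sumr_eq_const (x := 1)) ?mul1r.
Qed.

Lemma neg_edge_sym i j : neg_edge G i j = neg_edge G j i.
Proof. by rewrite /neg_edge adj_sym sg_sym. Qed.

Lemma uadj2_sym i j : (B *m B) i j = (B *m B) j i.
Proof.
rewrite !mxE; apply: eq_bigr => k _.
by rewrite mulrC (uadj_sym k j) (uadj_sym i k).
Qed.

Lemma sum_uadj2_row r i : sregular G r -> \sum_j (B *m B) i j = (r * r)%:Z.
Proof.
move=> reg; rewrite sum_mulmx_row.
under eq_bigr do rewrite sum_uadj_row reg.
by rewrite -mulr_suml sum_uadj_row reg.
Qed.

Lemma sum_sadj2_row rho i : net_regular G rho -> \sum_j (A *m A) i j = rho * rho.
Proof.
move=> nreg; rewrite sum_mulmx_row.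
under eq_bigr do rewrite sum_sadj_row nreg.
by rewrite -mulr_suml sum_sadj_row nreg.
Qed.

Lemma sadj_comm_const rho : net_regular G rho ->
  A *m const_mx 1 = const_mx 1 *m A.
Proof.
move=> nreg; apply/matrixP => i j; rewrite !mxE.
under eq_bigr do rewrite [const_mx _ _ _]mxE mulr1.
under [RHS]eq_bigr do rewrite [const_mx _ _ _]mxE mul1r sadj_sym.
by rewrite !sum_sadj_row !nreg.
Qed.

Lemma nonadj_of_not_complete : ~ scomplete G -> exists i j, nonadj i j.
Proof.
move=> ncomp; case: (pickP (fun ij : 'I_n * 'I_n => nonadj ij.1 ij.2)).
  by move=> [i j] ij; exists i, j.
move=> none; case: ncomp => i j ij.
by move/negbT: (none (i, j)); rewrite /nonadj ij negbK.
Qed.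

End SignedGraphCounting.

Section FiveRegularNetOne.
Variables (n : nat) (G : signed_graph n) (c : int).
Local Notation A := (sadj G).
Local Notation B := (uadj G).
Hypothesis reg5 : sregular G 5.
Hypothesis net1 : net_regular G 1.
Hypothesis sadj2_diag : forall i, (A *m A) i i = (5%N)%:Z.
Hypothesis sadj2_pos : forall i j, pos_edge G i j -> (A *m A) i j = 2.
Hypothesis sadj2_neg : forall i j, neg_edge G i j -> (A *m A) i j = 0.
Hypothesis sadj2_nonadj : forall i j, i != j -> ~~ adj G i j -> (A *m A) i j = c.

Lemma npos_nneg i : npos G i = 3 /\ nneg G i = 2.
Proof.
by have := sdegE G i; have := net1 i; rewrite reg5 /net_deg /npos /nneg; lia.
Qed.

Lemma c_mul_nnonadj i : c * nnonadj G i = -10.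
Proof.
have := sum_sadj2_row i net1; rewrite (sum_split_edges G i) sadj2_diag.
rewrite (sumr_eq_const (@sadj2_pos i)) (sumr_eq_const (@sadj2_neg i)).
rewrite (sumr_eq_const (x := c)); last by move=> j /andP[]; exact: sadj2_nonadj.
by have := npos_nneg i; rewrite /npos /nneg /nnonadj; lia.
Qed.

Lemma card_eq11 (i : 'I_n) : c = -2 -> n = 11.
Proof.
move=> cN2; have := card_split_edges G i; have := c_mul_nnonadj i.
by have := npos_nneg i; rewrite cN2 /npos /nneg /nnonadj; lia.
Qed.

Lemma sadj2E : A *m A = (5 - c)%:M + A + (1 - c) *: B + c *: const_mx 1.
Proof.
apply/matrixP => i j.
have -> : ((5 - c)%:M + A + (1 - c) *: B + c *: const_mx 1) i j =
    (5 - c) *+ (i == j) + A i j + (1 - c) * B i j + c.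
  by rewrite !mxE mulr1.
have [<-|ij] := eqVneq i j.
  by rewrite sadj2_diag; case: edgeP (adj_irr G i) => // _; lia.
move: (@sadj2_pos i j) (@sadj2_neg i j) (sadj2_nonadj ij).
by case: edgeP => [_ _ ->|-> // _ _|_ -> // _]; lia.
Qed.

Hypothesis c_neq1 : c != 1.

Lemma sadj_uadj_comm : A *m B = B *m A.
Proof.
apply: (mulmx_comm_of_sqr (de := 1)); first by rewrite scale1r; exact: sadj2E.
  exact: sadj_comm_const net1.
by rewrite subr_eq0 eq_sym.
Qed.

Lemma uadj2_range i j :
  [/\ `|(A *m A) i j| <= (B *m B) i j, (B *m B) i j <= 5
    & exists2 k : int, 0 <= k & (B *m B) i j = (A *m A) i j + 4 * k].
Proof.
split; first exact: norm_sadj2_le_uadj2.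
  by have := uadj2_le_sdeg G i j; rewrite reg5.
exists #|[set k | neg_edge G i k && pos_edge G k j]|%:Z => //.
by rewrite -(uadj2_sub_sadj2 i j sadj_uadj_comm) addrC subrK.
Qed.

Lemma uadj2_pos i j : pos_edge G i j -> (B *m B) i j = 2.
Proof.
move=> /sadj2_pos AA; have [norm_le le5 [k k0 BB]] := uadj2_range i j.
by rewrite AA in norm_le BB; lia.
Qed.

Lemma uadj2_neg i j : neg_edge G i j -> (B *m B) i j = 0 \/ (B *m B) i j = 4.
Proof.
move=> /sadj2_neg AA; have [norm_le le5 [k k0 BB]] := uadj2_range i j.
by rewrite AA in norm_le BB; lia.
Qed.

Lemma uadj2_nonadj i j : nonadj G i j ->
  (c = -1 /\ (B *m B) i j = 3) \/ (c = -2 /\ (B *m B) i j = 2).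
Proof.
case/andP => ij /(sadj2_nonadj ij) AA.
have [norm_le le5 [k k0 BB]] := uadj2_range i j.
have := c_mul_nnonadj i; rewrite /nnonadj AA in norm_le BB * => cm.
have : c = -5 \/ c = -4 \/ c = -3 \/ c = -2 \/ c = -1 by nia.
by case=> [|[|[|[|]]]] cv; rewrite cv in cm norm_le BB *; lia.
Qed.

Lemma c_eqN2 i j : nonadj G i j -> c = -2.
Proof.
move=> ij; case: (uadj2_nonadj ij) => [[c1 _]|[] //].
have := sum_uadj2_row i reg5.
rewrite (sum_split_edges G i) uadj2_diag reg5 (sumr_eq_const (@uadj2_pos i)).
rewrite (sumr_eq_const (x := 3) (P := nonadj G i)); last first.
  by move=> k /uadj2_nonadj; rewrite c1 => -[[_ ->]|[]].
have : 0 <= \sum_(k | neg_edge G i k) (B *m B) i k.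
  by apply: sumr_ge0 => k _; exact: uadj2_ge0.
set Q := \sum_(k | _) _.
by have := c_mul_nnonadj i; have := npos_nneg i; rewrite c1 /npos /nnonadj; lia.
Qed.

Section CaseMinusTwo.
Hypothesis cN2 : c = -2.

Lemma sum_uadj2_neg i : \sum_(k | neg_edge G i k) (B *m B) i k = 4.
Proof.
have := sum_uadj2_row i reg5.
rewrite (sum_split_edges G i) uadj2_diag reg5 (sumr_eq_const (@uadj2_pos i)).
rewrite (sumr_eq_const (x := 2) (P := nonadj G i)); last first.
  by move=> k /uadj2_nonadj; rewrite cN2 => -[[]|[_ ->]].
set Q := \sum_(k | _) _.
by have := c_mul_nnonadj i; have := npos_nneg i; rewrite cN2 /npos /nnonadj; lia.
Qed.

Definition matching i k : int :=
  if neg_edge G i k && ((B *m B) i k == 4) then 1 else 0.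

Lemma sum_matching_row i : \sum_k matching i k = 1.
Proof.
rewrite (sum_split_edges G i) (sumr_eq_const (x := 0)); last first.
  by rewrite /matching => k; case: edgeP.
rewrite (sumr_eq_const (x := 0) (P := nonadj G i)); last first.
  by rewrite /matching => k /andP[_]; case: edgeP.
rewrite /matching {1}/neg_edge (negbTE (adj_irr G i)) !mul0r add0r !addr0.
apply: (@mulfI _ 4) => //; rewrite mulr1 mulr_sumr -[RHS](sum_uadj2_neg i).
apply: eq_bigr => k ik; rewrite ik.
by case: (uadj2_neg ik) => ->.
Qed.

Lemma card_even : ~~ odd n.
Proof.
have msym i k : matching i k = matching k i.
  by rewrite /matching neg_edge_sym uadj2_sym.
have mhollow i : matching i i = 0.
  by rewrite /matching /neg_edge (negbTE (adj_irr G i)).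
have := sum_sym_hollow msym mhollow.
rewrite (eq_bigr _ (fun i _ => sum_matching_row i)) sumr_const card_ord natz.
by set X := \sum_(i < n) _; lia.
Qed.

End CaseMinusTwo.

End FiveRegularNetOne.

Theorem mainTheorem8 (n : nat) (G : signed_graph n) (a b c : int) :
  ~ (sconnected G /\ ~ scomplete G /\ sregular G 5 /\ net_regular G 1 /\
     SRSG G 5 a b c /\
     (classC1 G a b c \/ classC4 G a b c \/ classC5 G a b c) /\
     (a, b) = (2, 0)).
Proof.
move=> [_ [ncomp [reg5 [net1 [[_ [_ [diag [pos [neg non]]]]] [cls [a2 b0]]]]]]].
subst a b; have [i [j ij]] := nonadj_of_not_complete ncomp.
have c_mul := c_mul_nnonadj reg5 net1 diag pos neg non i.
have c_neq1 : c != 1.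
  case: cls => [[] //|[[_ [_ c0]]|[_ [_ [_ c2]]]]].
  - by move: c_mul; rewrite c0 mul0r.
  - by apply: contra c2 => /eqP ->.
have cN2 := c_eqN2 reg5 net1 diag pos neg non c_neq1 ij.
have := card_even reg5 net1 diag pos neg non c_neq1 cN2.
by rewrite (card_eq11 reg5 net1 diag pos neg non i cN2).
Qed.
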